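(* Let $x,y$ be two distinct points of the unit disk $\mathbb{B}^2=\{z\in\mathbb{C}:|z|<1\}$. Then the hyperbolic midpoint of the hyperbolic geodesic segment joining $x$ and $y$ is constructible by ruler and compass from the points $0,1,x,y$.
   Context: The hyperbolic distance $\rho$ on $\mathbb{B}^2$ is given by $\sinh\frac{\rho(x,y)}{2}=\frac{|x-y|}{\sqrt{1-|x|^2}\sqrt{1-|y|^2}}$. The hyperbolic geodesic segment $J[x,y]$ is the arc joining $x$ and $y$ of the circle orthogonal to the unit circle $S^1$ (or of the diameter, if $0,x,y$ are collinear) containing $x,y$; its hyperbolic midpoint is the unique $z\in J[x,y]$ with $\rho(x,z)=\rho(z,y)$. A point is constructible by ruler and compass from a finite set $S\subset\mathbb{C}$ if it belongs to the smallest set $C\supseteq S$ closed under adding intersection points of lines through two distinct points of $C$ and circles with centre in $C$ passing through a point of $C$ (so the unit circle, centred at $0$ through $1$, is available). *)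

(* points of the plane C = R^2 as pairs of Stdlib reals. *)
From Stdlib Require Import Reals Lra.
Open Scope R_scope.

Definition pt := (R * R)%type.

Definition pzero : pt := (0, 0).
Definition pone : pt := (1, 0).

Definition nrm2 (p : pt) : R := fst p * fst p + snd p * snd p.
Definition nrm (p : pt) : R := sqrt (nrm2 p).
Definition psub (p q : pt) : pt := (fst p - fst q, snd p - snd q).
Definition dist (p q : pt) : R := nrm (psub p q).

Definition cross (u v : pt) : R := fst u * snd v - snd u * fst v.

Definition in_disk (p : pt) : Prop := nrm p < 1.

Definition rho (x y : pt) : R :=
  2 * arcsinh (dist x y / (sqrt (1 - nrm2 x) * sqrt (1 - nrm2 y))).

(* hyperbolic geodesic segment J[x,y]:
   - if 0, x, y are collinear: the Euclidean segment [x,y] of the diameter;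
   - otherwise: the arc joining x and y of the circle (center c, radius r)
     orthogonal to the unit circle (|c|^2 = 1 + r^2) through x and y, namely the
     arc lying in the disk, i.e. the minor arc: the points of the circle in the
     closed half-plane bounded by the line xy not containing the center c. *)
Definition in_geodesic (x y z : pt) : Prop :=
  (cross x y = 0 /\
     exists t, 0 <= t <= 1 /\ z = (fst x + t * (fst y - fst x), snd x + t * (snd y - snd x)))
  \/
  (cross x y <> 0 /\
     exists (c : pt) (r : R), 0 < r /\ nrm2 c = 1 + r * r /\
       dist x c = r /\ dist y c = r /\ dist z c = r /\
       cross (psub y x) (psub z x) * cross (psub y x) (psub c x) <= 0).

Definition hyp_midpoint (x y z : pt) : Prop :=
  in_geodesic x y z /\ rho x z = rho z y.

Definition on_line (a b z : pt) : Prop := cross (psub b a) (psub z a) = 0.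
Definition on_circle (c d z : pt) : Prop := dist z c = dist d c.

Inductive constructible (S : pt -> Prop) : pt -> Prop :=
| cons_base z : S z -> constructible S z
| cons_ll a b c d z :
    constructible S a -> constructible S b -> constructible S c -> constructible S d ->
    a <> b -> c <> d ->
    ~ (forall w, on_line a b w <-> on_line c d w) ->
    on_line a b z -> on_line c d z -> constructible S z
| cons_lc a b c d z :
    constructible S a -> constructible S b -> constructible S c -> constructible S d ->
    a <> b -> on_line a b z -> on_circle c d z -> constructible S z
| cons_cc a b c d z :
    constructible S a -> constructible S b -> constructible S c -> constructible S d ->
    ~ (forall w, on_circle a b w <-> on_circle c d w) ->
    on_circle a b z -> on_circle c d z -> constructible S z.

(* The midpoint m is cut out by two equations whose coefficients are rational in
   the coordinates of x and y.  Equality of the hyperbolic distances says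
   (1 - |y|^2) |x - m|^2 = (1 - |x|^2) |y - m|^2: a circle, or a line through 0
   when |x| = |y|.  The geodesic is either the diameter through x, y or a circle
   orthogonal to the unit circle, whose centre solves the linear system
   2 c.x = 1 + |x|^2, 2 c.y = 1 + |y|^2.  Since the constructible reals form a
   field closed under square roots, m is an intersection of constructible lines
   and circles (for the orthogonal circle, of that circle with the radical axis of
   the two circles, a line through 0). *)

(* Reals before Defs, so that Defs.dist is not shadowed by the metric-space dist *)
From Stdlib Require Import Reals Lra Nsatz.
From Pilot Require Import Defs.
Open Scope R_scope.

Definition dot (u v : pt) : R := fst u * fst v + snd u * snd v.
Definition rot (v : pt) : pt := (- snd v, fst v).

(* loops on a section variable of type pt, which destruct cannot clear *)
Ltac coords :=
  repeat match goal with p : pt |- _ => destruct p end;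
  unfold on_line, cross, dot, rot, nrm2, psub in *; simpl in *.

Lemma pt_eq_dec (p q : pt) : {p = q} + {p <> q}.
Proof.
  destruct p as [a b], q as [c d].
  destruct (Req_EM_T a c), (Req_EM_T b d); subst; auto;
    right; intros E; injection E; intros; contradiction.
Qed.

Lemma nrm2_ge0 p : 0 <= nrm2 p.
Proof. coords; nra. Qed.

Lemma nrm2_eq0 p : nrm2 p = 0 -> p = pzero.
Proof.
  destruct p as [a b]; unfold nrm2, pzero; simpl; intros H.
  assert (a = 0) by nra; assert (b = 0) by nra; subst; reflexivity.
Qed.

Lemma nrm2_psub_gt0 p q : p <> q -> 0 < nrm2 (psub p q).
Proof.
  intros Hpq. destruct (Rle_lt_or_eq_dec 0 _ (nrm2_ge0 (psub p q))) as [|E]; auto.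
  exfalso; apply Hpq. symmetry in E; apply nrm2_eq0 in E.
  destruct p, q; unfold psub, pzero in E; simpl in E; injection E; intros.
  f_equal; lra.
Qed.

Lemma nrm2_psubC p q : nrm2 (psub p q) = nrm2 (psub q p).
Proof. coords; ring. Qed.

Lemma nrm2_psub_expand p q : nrm2 (psub p q) = nrm2 p + nrm2 q - 2 * dot p q.
Proof. coords; ring. Qed.

Lemma nrm2_of_dist p q r : dist p q = r -> nrm2 (psub p q) = r * r.
Proof. unfold dist, nrm; intros <-. rewrite sqrt_sqrt; auto using nrm2_ge0. Qed.

Lemma dist_of_nrm2 p q r : 0 <= r -> nrm2 (psub p q) = r * r -> dist p q = r.
Proof. intros hr E; unfold dist, nrm; rewrite E; now apply sqrt_square. Qed.

Lemma on_circle_nrm2 c d z : nrm2 (psub z c) = nrm2 (psub d c) -> on_circle c d z.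
Proof. unfold on_circle, dist, nrm; intros ->; reflexivity. Qed.

Lemma in_disk_nrm2 p : in_disk p <-> nrm2 p < 1.
Proof.
  unfold in_disk, nrm; split; intros H.
  - apply sqrt_lt_0_alt; rewrite sqrt_1; exact H.
  - rewrite <- sqrt_1; apply sqrt_lt_1_alt; split; auto using nrm2_ge0.
Qed.

Lemma lines_differ a b c d w :
  ~ on_line a b w -> on_line c d w -> ~ (forall z, on_line a b z <-> on_line c d z).
Proof. intros Hn Hw H; apply Hn, H, Hw. Qed.

Lemma circles_differ a b c d w :
  on_circle a b w -> ~ on_circle c d w -> ~ (forall z, on_circle a b z <-> on_circle c d z).
Proof. intros Hw Hn H; apply Hn, H, Hw. Qed.

Lemma not_on_circle_center c d : c <> d -> ~ on_circle d c d.
Proof.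
  unfold on_circle, dist, nrm; intros Hcd E.
  apply (nrm2_psub_gt0 c d), sqrt_lt_R0 in Hcd.
  rewrite <- E in Hcd; unfold nrm2, psub in Hcd; simpl in Hcd.
  rewrite Rminus_diag, Rminus_diag, Rmult_0_l, Rplus_0_l, sqrt_0 in Hcd; lra.
Qed.

Lemma sqrt3_sq : sqrt 3 * sqrt 3 = 3.
Proof. apply sqrt_sqrt; lra. Qed.

Section Constructions.

Variable S : pt -> Prop.
Hypothesis S0 : S pzero.
Hypothesis S1 : S pone.
Local Notation K := (constructible S).

Definition equilateral_apex (a b : pt) : pt :=
  ((fst a + fst b) / 2 - sqrt 3 / 2 * (snd b - snd a),
   (snd a + snd b) / 2 + sqrt 3 / 2 * (fst b - fst a)).

Lemma equilateral_apex_dist a b :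
  nrm2 (psub (equilateral_apex a b) a) = nrm2 (psub b a) /\
  nrm2 (psub (equilateral_apex a b) b) = nrm2 (psub a b).
Proof.
  pose proof sqrt3_sq as h3; unfold equilateral_apex; coords.
  split; match goal with |- ?L = ?R =>
    assert (E : L - R = (sqrt 3 * sqrt 3 - 3) / 4 * R) by field end; rewrite h3 in E; lra.
Qed.

Lemma constructible_apex a b : K a -> K b -> K (equilateral_apex a b).
Proof.
  intros Ha Hb; destruct (pt_eq_dec a b) as [<-|Hab].
  - replace (equilateral_apex a a) with a; auto.
    destruct a; unfold equilateral_apex; simpl; f_equal; field.
  - destruct (equilateral_apex_dist a b) as [Da Db].
    apply (cons_cc S a b b a); auto; try (apply on_circle_nrm2; assumption).
    apply (circles_differ _ _ _ _ b); [reflexivity | now apply not_on_circle_center].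
Qed.

Lemma constructible_reflect a b : K a -> K b -> K (2 * fst b - fst a, 2 * snd b - snd a).
Proof.
  intros Ha Hb; destruct (pt_eq_dec a b) as [<-|Hab].
  - replace (2 * fst a - fst a, 2 * snd a - snd a) with a; auto.
    destruct a; simpl; f_equal; ring.
  - apply (cons_lc S a b b a); auto.
    + coords; ring.
    + apply on_circle_nrm2; coords; ring.
Qed.

Lemma constructible_midpoint a b : K a -> K b -> K ((fst a + fst b) / 2, (snd a + snd b) / 2).
Proof.
  intros Ha Hb; destruct (pt_eq_dec a b) as [<-|Hab].
  - replace ((fst a + fst a) / 2, (snd a + snd a) / 2) with a; auto.
    destruct a; simpl; f_equal; field.
  - (* the perpendicular bisector through the two apexes meets the line ab at the midpoint *)
    pose proof (nrm2_psub_gt0 _ _ Hab) as Hu.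
    pose proof (sqrt_lt_R0 3 ltac:(lra)) as h3.
    assert (Hcross : cross (psub (equilateral_apex b a) (equilateral_apex a b))
                           (psub a (equilateral_apex a b)) = - (sqrt 3 / 2) * nrm2 (psub a b)).
    { unfold equilateral_apex; coords; field. }
    apply (cons_ll S (equilateral_apex a b) (equilateral_apex b a) a b);
      auto using constructible_apex.
    + intros E; rewrite E in Hcross; revert Hcross.
      generalize (equilateral_apex a b); intros p; coords; nra.
    + apply (lines_differ _ _ _ _ a); [|coords; ring].
      unfold on_line; rewrite Hcross; nra.
    + unfold equilateral_apex; coords; field.
    + coords; field.
Qed.

Lemma constructible_parallelogram a b c : K a -> K b -> K c ->
  K (fst a + fst b - fst c, snd a + snd b - snd c).
Proof.
  intros Ha Hb Hc.
  pose proof (constructible_reflect _ _ Hc (constructible_midpoint _ _ Ha Hb)) as H.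
  simpl in H; replace (fst a + fst b - fst c, snd a + snd b - snd c)
    with (2 * ((fst a + fst b) / 2) - fst c, 2 * ((snd a + snd b) / 2) - snd c); auto.
  f_equal; field.
Qed.

Lemma constructible_opp a : K a -> K (- fst a, - snd a).
Proof.
  intros Ha; pose proof (cons_base S _ S0) as H0.
  replace (- fst a, - snd a) with (fst pzero + fst pzero - fst a, snd pzero + snd pzero - snd a);
    [now apply constructible_parallelogram | unfold pzero; simpl; f_equal; ring].
Qed.

Lemma constructible_rot a : K a -> K (rot a).
Proof.
  intros Ha; destruct (pt_eq_dec a pzero) as [->|Ha0].
  { unfold rot, pzero; simpl; rewrite Ropp_0; now apply cons_base. }
  (* the apex on the segment from -a to a is sqrt 3 times the rotated vector *)
  pose (q := equilateral_apex (- fst a, - snd a) a).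
  assert (Eq : q = (- sqrt 3 * snd a, sqrt 3 * fst a))
    by (unfold q, equilateral_apex; simpl; f_equal; field).
  pose proof (sqrt_lt_R0 3 ltac:(lra)) as h3.
  apply (cons_lc S pzero q pzero a); auto using cons_base.
  - apply constructible_apex; [apply constructible_opp|]; exact Ha.
  - rewrite Eq; intros E; injection E as E1 E2; apply Ha0.
    symmetry in E1, E2; apply Rmult_integral in E1; apply Rmult_integral in E2.
    destruct a; unfold pzero; simpl in *; f_equal; lra.
  - rewrite Eq; coords; ring.
  - apply on_circle_nrm2; coords; ring.
Qed.

Lemma constructible_e2 : K (0, 1).
Proof.
  pose proof (constructible_rot _ (cons_base S _ S1)) as H; unfold rot in H; simpl in H.
  now rewrite Ropp_0 in H.
Qed.

Definition constructible_num (r : R) : Prop := K (r, 0).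
Local Notation C := constructible_num.

Lemma constructible_num_fst p : K p -> C (fst p).
Proof.
  intros Hp; destruct p as [p1 p2]; unfold constructible_num; simpl.
  assert (Hp' : K (p1, p2 + 1)).
  { pose proof (constructible_parallelogram _ _ _ Hp constructible_e2 (cons_base S _ S0)) as H.
    simpl in H; replace (p1, p2 + 1) with (p1 + 0 - 0, p2 + 1 - 0); auto; f_equal; ring. }
  apply (cons_ll S pzero pone (p1, p2) (p1, p2 + 1)); auto using cons_base.
  - unfold pzero, pone; intros E; injection E; lra.
  - intros E; injection E; lra.
  - apply (lines_differ _ _ _ _ (p1, 1)); coords; lra.
  - coords; ring.
  - coords; ring.
Qed.

Lemma constructible_num_0 : C 0.
Proof. now apply cons_base. Qed.

Lemma constructible_num_1 : C 1.
Proof. now apply cons_base. Qed.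

Lemma constructible_num_add a b : C a -> C b -> C (a + b).
Proof.
  intros Ha Hb; pose proof (constructible_parallelogram _ _ _ Ha Hb (cons_base S _ S0)) as H.
  unfold constructible_num; simpl in H; replace (a + b, 0) with (a + b - 0, 0 + 0 - 0); auto.
  f_equal; ring.
Qed.

Lemma constructible_num_opp a : C a -> C (- a).
Proof.
  intros Ha; pose proof (constructible_opp _ Ha) as H; simpl in H.
  unfold constructible_num; now rewrite Ropp_0 in H.
Qed.

Lemma constructible_num_sub a b : C a -> C b -> C (a - b).
Proof. intros; apply constructible_num_add, constructible_num_opp; assumption. Qed.

Lemma constructible_num_snd p : K p -> C (snd p).
Proof.
  intros Hp; pose proof (constructible_num_fst _ (constructible_rot _ Hp)) as H.
  unfold rot in H; simpl in H; rewrite <- Ropp_involutive; now apply constructible_num_opp.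
Qed.

Lemma constructible_pair a b : C a -> C b -> K (a, b).
Proof.
  intros Ha Hb.
  pose proof (constructible_parallelogram _ _ _ Ha (constructible_rot _ Hb) (cons_base S _ S0))
    as H.
  unfold rot in H; simpl in H; replace (a, b) with (a + - 0 - 0, 0 + b - 0); auto; f_equal; ring.
Qed.

(* the line through (0, b) and (a, b - 1) meets the x-axis at (a b, 0) *)
Lemma constructible_num_mul a b : C a -> C b -> C (a * b).
Proof.
  intros Ha Hb.
  assert (H1 : K (0, b)) by (apply constructible_pair; auto using constructible_num_0).
  assert (H2 : K (a, b - 1)) by (apply constructible_pair, constructible_num_sub;
                                auto using constructible_num_1).
  apply (cons_ll S pzero pone (0, b) (a, b - 1)); auto using cons_base.
  - unfold pzero, pone; intros E; injection E; lra.
  - intros E; injection E; lra.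
  - apply (lines_differ _ _ _ _ (a * (b - 1), 1)); coords; [lra | ring].
  - coords; ring.
  - coords; ring.
Qed.

Lemma constructible_num_inv a : C a -> C (/ a).
Proof.
  intros Ha; destruct (Req_dec a 0) as [->|Ha0].
  { rewrite Rinv_0; apply constructible_num_0. }
  assert (H1 : K (1, 1 - a)) by (apply constructible_pair, constructible_num_sub;
                                auto using constructible_num_1).
  apply (cons_ll S pzero pone (0, 1) (1, 1 - a)); auto using cons_base, constructible_e2.
  - unfold pzero, pone; intros E; injection E; lra.
  - intros E; injection E; lra.
  - apply (lines_differ _ _ _ _ (0, 1)); coords; lra.
  - coords; ring.
  - coords; field; exact Ha0.
Qed.

Lemma constructible_num_div a b : C a -> C b -> C (a / b).
Proof. intros; apply constructible_num_mul, constructible_num_inv; assumption. Qed.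

Lemma constructible_num_2 : C 2.
Proof. replace 2 with (1 + 1) by ring; apply constructible_num_add; apply constructible_num_1. Qed.

(* the circle on the diameter from (-1, 0) to (a, 0) meets the y-axis at height sqrt a *)
Lemma constructible_num_sqrt a : C a -> C (sqrt a).
Proof.
  intros Ha; destruct (Rlt_or_le a 0) as [Hn|Hp].
  { rewrite sqrt_neg_0 by lra; apply constructible_num_0. }
  assert (Hc : C ((a - 1) / 2)) by (apply constructible_num_div, constructible_num_2;
                                   apply constructible_num_sub; auto using constructible_num_1).
  assert (H : K (0, sqrt a)).
  { apply (cons_lc S pzero (0, 1) ((a - 1) / 2, 0) (a, 0)); auto using cons_base, constructible_e2.
    - unfold pzero; intros E; injection E; lra.
    - coords; ring.
    - apply on_circle_nrm2; coords. pose proof (sqrt_sqrt a Hp); nra. }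
  exact (constructible_num_snd _ H).
Qed.

End Constructions.

Ltac constructible_num_auto :=
  repeat first
    [ assumption
    | apply constructible_num_0 | apply constructible_num_1 | apply constructible_num_2
    | apply constructible_num_add | apply constructible_num_sub | apply constructible_num_opp
    | apply constructible_num_mul | apply constructible_num_div | apply constructible_num_inv
    | apply constructible_num_sqrt
    | apply constructible_num_fst | apply constructible_num_snd ].

(* rho x z = rho z y with the arcsinh and the common factor sqrt (1 - |z|^2) removed *)
Definition on_hyp_bisector (x y z : pt) : Prop :=
  (1 - nrm2 y) * nrm2 (psub x z) = (1 - nrm2 x) * nrm2 (psub y z).

Lemma arcsinh_inj u v : arcsinh u = arcsinh v -> u = v.
Proof. intros H; rewrite <- (sinh_arcsinh u), <- (sinh_arcsinh v), H; reflexivity. Qed.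

Lemma div_eq_div_iff a b p q r : p <> 0 -> q <> 0 -> r <> 0 ->
  a / (p * q) = b / (q * r) <-> a * r = b * p.
Proof.
  intros hp hq hr.
  replace (a / (p * q)) with (a * r / (p * q * r)) by (field; auto).
  replace (b / (q * r)) with (b * p / (p * q * r)) by (field; auto).
  split; intros E; [|now rewrite E].
  unfold Rdiv in E; apply Rmult_eq_reg_r in E; auto.
  apply Rinv_neq_0_compat; repeat apply Rmult_integral_contrapositive_currified; auto.
Qed.

Lemma rho_eq_iff x y m : nrm2 x < 1 -> nrm2 y < 1 -> nrm2 m < 1 ->
  rho x m = rho m y <-> on_hyp_bisector x y m.
Proof.
  intros hx hy hm; unfold rho, on_hyp_bisector, dist, nrm; rewrite (nrm2_psubC m y).
  assert (hsx : 0 < sqrt (1 - nrm2 x)) by (apply sqrt_lt_R0; lra).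
  assert (hsy : 0 < sqrt (1 - nrm2 y)) by (apply sqrt_lt_R0; lra).
  assert (hsm : 0 < sqrt (1 - nrm2 m)) by (apply sqrt_lt_R0; lra).
  pose proof (nrm2_ge0 (psub x m)) as hX; pose proof (nrm2_ge0 (psub y m)) as hY.
  transitivity (sqrt (nrm2 (psub x m)) * sqrt (1 - nrm2 y) =
                sqrt (nrm2 (psub y m)) * sqrt (1 - nrm2 x)).
  { rewrite <- (div_eq_div_iff _ _ (sqrt (1 - nrm2 x)) (sqrt (1 - nrm2 m)) (sqrt (1 - nrm2 y)))
      by lra.
    split; intros E; [apply arcsinh_inj; lra | now rewrite E]. }
  rewrite <- !sqrt_mult, (Rmult_comm (1 - nrm2 y)), (Rmult_comm (1 - nrm2 x)) by lra.
  split; intros E; [|now rewrite E].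
  apply sqrt_inj in E; try apply Rmult_le_pos; lra.
Qed.

Lemma segment_in_disk x y t : nrm2 x < 1 -> nrm2 y < 1 -> 0 <= t <= 1 ->
  nrm2 (fst x + t * (fst y - fst x), snd x + t * (snd y - snd x)) < 1.
Proof.
  intros hx hy ht.
  assert (E : nrm2 (fst x + t * (fst y - fst x), snd x + t * (snd y - snd x)) =
              (1 - t) * nrm2 x + t * nrm2 y - t * (1 - t) * nrm2 (psub y x)) by (coords; ring).
  rewrite E; pose proof (nrm2_ge0 (psub y x)).
  assert (0 <= t * (1 - t) * nrm2 (psub y x)) by (apply Rmult_le_pos; nra).
  assert (0 < (1 - t) * (1 - nrm2 x) + t * (1 - nrm2 y)).
  { destruct (Req_dec t 0) as [->|]; [lra | nra]. }
  lra.
Qed.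

Lemma arc_beyond_chord u v w r :
  nrm2 u = r * r -> nrm2 v = r * r -> nrm2 w = r * r -> cross u v <> 0 ->
  cross (psub v u) (psub w u) * cross u v <= 0 ->
  exists a b, 0 <= a /\ 0 <= b /\ 1 <= a + b /\
    w = (a * fst u + b * fst v, a * snd u + b * snd v).
Proof.
  intros hu hv hw hK hS.
  set (K := cross u v) in *.
  exists (cross w v / K), (cross u w / K).
  set (a := cross w v / K); set (b := cross u w / K).
  assert (Ew : w = (a * fst u + b * fst v, a * snd u + b * snd v)).
  { unfold a, b, K in *; coords; f_equal; field; exact hK. }
  assert (Hab : 1 <= a + b).
  { assert (E : cross (psub v u) (psub w u) * K = (1 - a - b) * (K * K)).
    { unfold a, b, K in *; coords; field; exact hK. }
    pose proof (Rsqr_pos_lt K hK); unfold Rsqr in *; nra. }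
  (* |w|^2 = r^2 gives 2 a b (r^2 - u.v) = r^2 ((a + b)^2 - 1) >= 0: a, b have the same sign *)
  assert (Huv : 0 < r * r - dot u v).
  { assert (E : r * r - dot u v = nrm2 (psub u v) / 2) by (coords; lra).
    rewrite E; enough (0 < nrm2 (psub u v)) by lra.
    apply nrm2_psub_gt0; intros ->; apply hK; unfold K; coords; ring. }
  assert (Hn : 2 * (a * b) * (r * r - dot u v) = r * r * ((a + b) * (a + b) - 1)).
  { rewrite Ew in hw; clearbody a b; clear - hu hv hw; coords; nsatz. }
  assert (0 <= r * r * ((a + b) * (a + b) - 1)) by (apply Rmult_le_pos; nra).
  assert (0 <= a * b) by nra.
  repeat split; auto; nra.
Qed.

Lemma nrm2_shift p c : nrm2 p = nrm2 c + 2 * dot c (psub p c) + nrm2 (psub p c).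
Proof. coords; ring. Qed.

Lemma chord_not_diameter x y c r : nrm2 x < 1 -> nrm2 y < 1 -> x <> y ->
  nrm2 c = 1 + r * r -> nrm2 (psub x c) = r * r -> nrm2 (psub y c) = r * r ->
  cross (psub x c) (psub y c) <> 0.
Proof.
  intros hx hy hxy hc hu hv hK.
  (* equal radii and a vanishing cross product make xy a diameter, so c = (x + y)/2 *)
  assert (E : nrm2 (psub (psub x c) (psub c y)) * nrm2 (psub x y) =
              4 * (cross (psub x c) (psub y c) * cross (psub x c) (psub y c))).
  { revert hu hv; coords; intros hu hv; nsatz. }
  rewrite hK, Rmult_0_l, Rmult_0_r in E.
  apply Rmult_integral in E as [E|E].
  - apply nrm2_eq0 in E.
    assert (Ec : nrm2 c = nrm2 (psub x y) / 4 * (-1) + (nrm2 x + nrm2 y) / 2).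
    { revert E; coords; intros E; injection E; intros; nra. }
    pose proof (nrm2_ge0 (psub x y)); nra.
  - pose proof (nrm2_psub_gt0 _ _ hxy); lra.
Qed.

Lemma arc_in_disk x y z c r : nrm2 x < 1 -> nrm2 y < 1 -> x <> y ->
  nrm2 c = 1 + r * r ->
  nrm2 (psub x c) = r * r -> nrm2 (psub y c) = r * r -> nrm2 (psub z c) = r * r ->
  cross (psub y x) (psub z x) * cross (psub y x) (psub c x) <= 0 -> nrm2 z < 1.
Proof.
  intros hx hy hxy hc hu hv hw hS.
  assert (hS' : cross (psub (psub y c) (psub x c)) (psub (psub z c) (psub x c)) *
                cross (psub x c) (psub y c) <= 0).
  { replace (cross (psub (psub y c) (psub x c)) (psub (psub z c) (psub x c)) *
             cross (psub x c) (psub y c))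
      with (cross (psub y x) (psub z x) * cross (psub y x) (psub c x)) by (coords; ring).
    exact hS. }
  destruct (arc_beyond_chord _ _ _ r hu hv hw (chord_not_diameter x y c r hx hy hxy hc hu hv) hS')
    as (a & b & ha & hb & hab & Ew).
  (* a point p of the circle is inside the disk iff c.(p - c) < -r^2 *)
  pose proof (nrm2_shift x c); pose proof (nrm2_shift y c); pose proof (nrm2_shift z c).
  assert (Ecw : dot c (psub z c) = a * dot c (psub x c) + b * dot c (psub y c)).
  { rewrite Ew; unfold dot; simpl; ring. }
  assert (0 <= r * r) by nra.
  assert (a * dot c (psub x c) + b * dot c (psub y c) < - (r * r)).
  { destruct (Req_dec a 0) as [->|]; nra. }
  lra.
Qed.

Lemma geodesic_in_disk x y z : nrm2 x < 1 -> nrm2 y < 1 -> x <> y ->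
  in_geodesic x y z -> nrm2 z < 1.
Proof.
  intros hx hy hxy [[_ (t & ht & ->)] | [_ (c & r & _ & hc & Dx & Dy & Dz & hS)]].
  - now apply segment_in_disk.
  - apply nrm2_of_dist in Dx, Dy, Dz.
    now apply (arc_in_disk x y z c r).
Qed.

Lemma on_hyp_bisector_segment x y : nrm2 x < 1 -> nrm2 y < 1 ->
  let p := sqrt (1 - nrm2 y) in let q := sqrt (1 - nrm2 x) in
  on_hyp_bisector x y
    (fst x + q / (p + q) * (fst y - fst x), snd x + q / (p + q) * (snd y - snd x)).
Proof.
  intros hx hy p q.
  assert (hp : 0 < p) by (apply sqrt_lt_R0; lra).
  assert (hq : 0 < q) by (apply sqrt_lt_R0; lra).
  assert (Ep : p * p = 1 - nrm2 y) by (apply sqrt_sqrt; lra).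
  assert (Eq : q * q = 1 - nrm2 x) by (apply sqrt_sqrt; lra).
  unfold on_hyp_bisector; rewrite <- Ep, <- Eq; clearbody p q; coords; field; lra.
Qed.

Lemma orth_circle_iff c r p : nrm2 c = 1 + r * r ->
  nrm2 (psub p c) = r * r <-> 2 * dot c p = 1 + nrm2 p.
Proof.
  intros hc; rewrite nrm2_psub_expand.
  replace (dot p c) with (dot c p) by (unfold dot; ring); lra.
Qed.

Lemma orth_circle_radius c z : 2 * dot c z = 1 + nrm2 z -> nrm2 (psub z c) = nrm2 c - 1.
Proof.
  intros hz; rewrite nrm2_psub_expand.
  replace (dot z c) with (dot c z) by (unfold dot; ring); lra.
Qed.

Lemma orth_center_outside c x : nrm2 x < 1 -> 2 * dot c x = 1 + nrm2 x -> 1 < nrm2 c.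
Proof.
  intros hx hc; pose proof (orth_circle_radius c x hc) as E.
  destruct (pt_eq_dec x c) as [<-|hxc].
  - assert (nrm2 x = dot x x) by (coords; ring); lra.
  - pose proof (nrm2_psub_gt0 _ _ hxc); lra.
Qed.

(* the centre of the circle through x and y orthogonal to the unit circle, by Cramer's rule *)
Definition orth_center (x y : pt) : pt :=
  (((1 + nrm2 x) * snd y - (1 + nrm2 y) * snd x) / (2 * cross x y),
   ((1 + nrm2 y) * fst x - (1 + nrm2 x) * fst y) / (2 * cross x y)).

Lemma orth_center_spec x y : cross x y <> 0 ->
  2 * dot (orth_center x y) x = 1 + nrm2 x /\ 2 * dot (orth_center x y) y = 1 + nrm2 y.
Proof. intros hk; unfold orth_center; coords; split; field; exact hk. Qed.

Lemma orth_center_unique x y c : cross x y <> 0 ->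
  2 * dot c x = 1 + nrm2 x -> 2 * dot c y = 1 + nrm2 y -> c = orth_center x y.
Proof.
  intros hk hx hy; unfold orth_center; rewrite <- hx, <- hy.
  clear hx hy; coords; f_equal; field; exact hk.
Qed.

Lemma nrm2_psub_div p q D : D <> 0 ->
  nrm2 (psub p (fst q / D, snd q / D)) = nrm2 (psub (D * fst p, D * snd p) q) / (D * D).
Proof. intros hD; coords; field; exact hD. Qed.

Lemma dot_div c q D : dot c (fst q / D, snd q / D) = dot c q / D.
Proof. unfold dot, Rdiv; simpl; ring. Qed.

Lemma nrm2_div q D : D <> 0 -> nrm2 (fst q / D, snd q / D) = nrm2 q / (D * D).
Proof. intros hD; unfold nrm2; simpl; field; exact hD. Qed.

Definition hyp_mid_num (x y : pt) : pt :=
  ((1 - nrm2 y) * fst x + (1 - nrm2 x) * fst y, (1 - nrm2 y) * snd x + (1 - nrm2 x) * snd y).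

Definition hyp_mid_denom (x y : pt) : R :=
  1 - nrm2 x * nrm2 y +
  sqrt (nrm2 (psub x y) + (1 - nrm2 x) * (1 - nrm2 y)) * sqrt ((1 - nrm2 x) * (1 - nrm2 y)).

Definition hyp_mid (x y : pt) : pt :=
  (fst (hyp_mid_num x y) / hyp_mid_denom x y, snd (hyp_mid_num x y) / hyp_mid_denom x y).

Lemma dot_hyp_mid_num c x y :
  dot c (hyp_mid_num x y) = (1 - nrm2 y) * dot c x + (1 - nrm2 x) * dot c y.
Proof. unfold hyp_mid_num; coords; ring. Qed.

(* polynomial identities behind the midpoint formula, valid for any square roots P and A *)
Lemma hyp_mid_identity_bisector x y P A D :
  P * P = (1 - nrm2 x) * (1 - nrm2 y) -> A * A = nrm2 (psub x y) + P * P ->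
  D = 1 - nrm2 x * nrm2 y + A * P ->
  (1 - nrm2 y) * nrm2 (psub (D * fst x, D * snd x) (hyp_mid_num x y)) =
  (1 - nrm2 x) * nrm2 (psub (D * fst y, D * snd y) (hyp_mid_num x y)).
Proof. intros HP HA ->; unfold hyp_mid_num; coords; nsatz. Qed.

Lemma hyp_mid_identity_circle x y P A D :
  P * P = (1 - nrm2 x) * (1 - nrm2 y) -> A * A = nrm2 (psub x y) + P * P ->
  D = 1 - nrm2 x * nrm2 y + A * P ->
  nrm2 (hyp_mid_num x y) + D * D =
  D * ((1 - nrm2 y) * (1 + nrm2 x) + (1 - nrm2 x) * (1 + nrm2 y)).
Proof. intros HP HA ->; unfold hyp_mid_num; coords; nsatz. Qed.

Lemma cross_hyp_mid_num x y D : D <> 0 ->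
  cross (psub y x) (psub (fst (hyp_mid_num x y) / D, snd (hyp_mid_num x y) / D) x) =
  (D - (1 - nrm2 y) - (1 - nrm2 x)) * cross x y / D.
Proof. intros hD; unfold hyp_mid_num; coords; field; exact hD. Qed.

Lemma cross_orth_center x y : cross x y <> 0 ->
  cross (psub y x) (psub (orth_center x y) x) =
  - ((1 - dot x y) * nrm2 (psub x y)) / (2 * cross x y).
Proof. intros hk; unfold orth_center; coords; field; exact hk. Qed.

Section MidpointFormula.

Variables x y : pt.
Hypothesis hx : nrm2 x < 1.
Hypothesis hy : nrm2 y < 1.

Lemma hyp_mid_denom_roots : exists P A,
  P * P = (1 - nrm2 x) * (1 - nrm2 y) /\ A * A = nrm2 (psub x y) + P * P /\ 0 < P <= A /\
  hyp_mid_denom x y = 1 - nrm2 x * nrm2 y + A * P.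
Proof.
  pose proof (nrm2_ge0 (psub x y)).
  assert (0 < (1 - nrm2 x) * (1 - nrm2 y)) by (apply Rmult_lt_0_compat; lra).
  exists (sqrt ((1 - nrm2 x) * (1 - nrm2 y))),
         (sqrt (nrm2 (psub x y) + (1 - nrm2 x) * (1 - nrm2 y))).
  rewrite !sqrt_sqrt by lra.
  repeat split; try reflexivity.
  - apply sqrt_lt_R0; lra.
  - apply sqrt_le_1_alt; lra.
Qed.

Lemma hyp_mid_denom_pos : 0 < hyp_mid_denom x y.
Proof.
  destruct hyp_mid_denom_roots as (P & A & _ & _ & hPA & ->).
  pose proof (nrm2_ge0 x); pose proof (nrm2_ge0 y).
  assert (0 <= (1 - nrm2 x) * nrm2 y) by (apply Rmult_le_pos; lra).
  assert (0 <= A * P) by (apply Rmult_le_pos; lra).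
  lra.
Qed.

Lemma hyp_mid_on_bisector : on_hyp_bisector x y (hyp_mid x y).
Proof.
  destruct hyp_mid_denom_roots as (P & A & EP & EA & _ & ED).
  pose proof hyp_mid_denom_pos as hD.
  unfold on_hyp_bisector, hyp_mid; rewrite !nrm2_psub_div by lra.
  unfold Rdiv; rewrite <- !Rmult_assoc; f_equal.
  exact (hyp_mid_identity_bisector x y P A _ EP EA ED).
Qed.

Lemma hyp_mid_on_orth_circle c :
  2 * dot c x = 1 + nrm2 x -> 2 * dot c y = 1 + nrm2 y ->
  2 * dot c (hyp_mid x y) = 1 + nrm2 (hyp_mid x y).
Proof.
  intros hcx hcy.
  destruct hyp_mid_denom_roots as (P & A & EP & EA & _ & ED).
  pose proof (hyp_mid_identity_circle x y P A _ EP EA ED) as Id.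
  pose proof hyp_mid_denom_pos as hD.
  assert (EM : 2 * dot c (hyp_mid_num x y) =
               (1 - nrm2 y) * (1 + nrm2 x) + (1 - nrm2 x) * (1 + nrm2 y)).
  { rewrite dot_hyp_mid_num, <- hcx, <- hcy; ring. }
  unfold hyp_mid; rewrite dot_div, nrm2_div by lra.
  rewrite <- EM in Id; revert Id hD.
  generalize (hyp_mid_denom x y) (nrm2 (hyp_mid_num x y)) (dot c (hyp_mid_num x y)).
  intros D N C Id hD.
  replace N with (D * (2 * C) - D * D) by lra; field; lra.
Qed.

Lemma hyp_mid_opposite_center : cross x y <> 0 ->
  cross (psub y x) (psub (hyp_mid x y) x) * cross (psub y x) (psub (orth_center x y) x) <= 0.
Proof.
  intros hk.
  destruct hyp_mid_denom_roots as (P & A & EP & _ & hPA & ED).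
  pose proof hyp_mid_denom_pos as hD.
  unfold hyp_mid; rewrite cross_hyp_mid_num, cross_orth_center by lra.
  assert (H1 : 0 <= hyp_mid_denom x y - (1 - nrm2 y) - (1 - nrm2 x)).
  { assert (0 <= P * (A - P)) by (apply Rmult_le_pos; lra); lra. }
  assert (H2 : 0 <= (1 - dot x y) * nrm2 (psub x y)).
  { pose proof (nrm2_psub_expand x y).
    pose proof (nrm2_ge0 (psub x y)); apply Rmult_le_pos; lra. }
  revert H1 H2 hD hk; generalize (hyp_mid_denom x y) (cross x y).
  intros D k H1 H2 hD hk.
  replace (_ * _) with (- ((D - (1 - nrm2 y) - (1 - nrm2 x)) * ((1 - dot x y) * nrm2 (psub x y)))
                        / (2 * D)) by (field; lra).
  assert (0 <= (D - (1 - nrm2 y) - (1 - nrm2 x)) * ((1 - dot x y) * nrm2 (psub x y)) * / (2 * D)).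
  { apply Rmult_le_pos; [now apply Rmult_le_pos | left; apply Rinv_0_lt_compat; lra]. }
  unfold Rdiv; lra.
Qed.

End MidpointFormula.

Lemma hyp_midpoint_of_bisector x y m : nrm2 x < 1 -> nrm2 y < 1 -> x <> y ->
  in_geodesic x y m -> on_hyp_bisector x y m -> hyp_midpoint x y m.
Proof.
  intros hx hy hxy hg hb; split; auto.
  apply rho_eq_iff; auto; now apply (geodesic_in_disk x y).
Qed.

Lemma hyp_midpoint_exists x y : nrm2 x < 1 -> nrm2 y < 1 -> x <> y ->
  exists m, hyp_midpoint x y m.
Proof.
  intros hx hy hxy; destruct (Req_dec (cross x y) 0) as [hk|hk].
  - (* on a diameter the midpoint divides [x, y] in the ratio sqrt (1 - |x|^2) : sqrt (1 - |y|^2) *)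
    set (p := sqrt (1 - nrm2 y)); set (q := sqrt (1 - nrm2 x)).
    assert (hp : 0 < p) by (apply sqrt_lt_R0; lra).
    assert (hq : 0 < q) by (apply sqrt_lt_R0; lra).
    eexists; apply hyp_midpoint_of_bisector; auto; [|apply on_hyp_bisector_segment; auto].
    left; split; auto; exists (q / (p + q)); split; [|reflexivity].
    assert (0 <= q / (p + q)) by (apply Rmult_le_pos; [|left; apply Rinv_0_lt_compat]; lra).
    assert (0 <= p / (p + q)) by (apply Rmult_le_pos; [|left; apply Rinv_0_lt_compat]; lra).
    assert (q / (p + q) + p / (p + q) = 1) by (field; lra).
    lra.
  - destruct (orth_center_spec x y hk) as [hcx hcy].
    set (c := orth_center x y) in *.
    pose proof (orth_center_outside c x hx hcx) as hc.
    set (r := sqrt (nrm2 c - 1)).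
    assert (hr : 0 < r) by (apply sqrt_lt_R0; lra).
    assert (Ec : nrm2 c = 1 + r * r) by (unfold r; rewrite sqrt_sqrt; lra).
    assert (Hon : forall z, 2 * dot c z = 1 + nrm2 z -> dist z c = r).
    { intros z hz; apply dist_of_nrm2; [lra|]; now apply (orth_circle_iff c r z Ec). }
    exists (hyp_mid x y); apply hyp_midpoint_of_bisector; auto using hyp_mid_on_bisector.
    right; split; auto; exists c, r; repeat split; auto using hyp_mid_on_orth_circle.
    now apply hyp_mid_opposite_center.
Qed.

Definition hyp_bisector_normal (x y : pt) : pt :=
  ((1 - nrm2 y) * fst x - (1 - nrm2 x) * fst y, (1 - nrm2 y) * snd x - (1 - nrm2 x) * snd y).

Lemma hyp_bisector_expand x y z :
  (1 - nrm2 y) * nrm2 (psub x z) - (1 - nrm2 x) * nrm2 (psub y z) =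
  (nrm2 x - nrm2 y) * (nrm2 z + 1) - 2 * dot (hyp_bisector_normal x y) z.
Proof. unfold hyp_bisector_normal; coords; ring. Qed.

Lemma hyp_bisector_expand_left x y :
  (nrm2 x - nrm2 y) * (nrm2 x + 1) - 2 * dot (hyp_bisector_normal x y) x =
  - ((1 - nrm2 x) * nrm2 (psub y x)).
Proof.
  rewrite <- hyp_bisector_expand; unfold psub at 1; rewrite !Rminus_diag.
  unfold nrm2 at 2; simpl; ring.
Qed.

Lemma nrm2_psub_shift q t : nrm2 (psub (fst q + t, snd q) q) = t * t.
Proof. coords; ring. Qed.

Lemma on_line_rot v z : on_line pzero (rot v) z <-> dot v z = 0.
Proof. unfold rot, pzero; coords; split; intros; lra. Qed.

Lemma rot_neq_pzero v z : dot v z <> 0 -> pzero <> rot v.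
Proof. unfold rot, pzero; coords; intros hv E; injection E; intros; apply hv; nra. Qed.

Section MidpointConstruction.

Variable S : pt -> Prop.
Hypothesis S0 : S pzero.
Hypothesis S1 : S pone.
Local Notation K := (constructible S).
Local Notation C := (constructible_num S).

Lemma constructible_hyp_bisector_normal x y : K x -> K y -> K (hyp_bisector_normal x y).
Proof.
  intros Hx Hy.
  apply constructible_pair; auto; constructible_num_auto.
Qed.

Lemma constructible_orth_center x y : K x -> K y -> K (orth_center x y).
Proof.
  intros Hx Hy.
  apply constructible_pair; auto; unfold cross; constructible_num_auto.
Qed.

(* on a diameter: the bisector is a line through 0 when |x| = |y|, a circle otherwise *)
Lemma constructible_bisector_meet_line x y m : K x -> K y -> x <> y ->
  nrm2 x < 1 -> nrm2 y < 1 -> on_line x y m -> on_hyp_bisector x y m -> K m.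
Proof.
  intros Hx Hy hxy hx hy Hl Hb.
  set (d := nrm2 x - nrm2 y); set (w := hyp_bisector_normal x y).
  assert (Hm : d * (nrm2 m + 1) - 2 * dot w m = 0).
  { unfold d, w; rewrite <- hyp_bisector_expand; unfold on_hyp_bisector in Hb; lra. }
  assert (Kw : K w) by now apply constructible_hyp_bisector_normal.
  assert (Cd : C d) by (unfold d; constructible_num_auto).
  destruct (Req_dec d 0) as [d0|d0].
  - assert (Hwx : dot w x <> 0).
    { pose proof (hyp_bisector_expand_left x y) as E; fold d w in E.
      pose proof (nrm2_psub_gt0 _ _ (not_eq_sym hxy)).
      assert (0 < (1 - nrm2 x) * nrm2 (psub y x)) by (apply Rmult_lt_0_compat; lra).
      rewrite d0 in E; lra. }
    apply (cons_ll S pzero (rot w) x y m); try assumption.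
    + now apply cons_base.
    + now apply constructible_rot.
    + now apply (rot_neq_pzero w x).
    + refine (lines_differ _ _ _ _ x _ _); [now rewrite on_line_rot | coords; ring].
    + apply on_line_rot; rewrite d0 in Hm; lra.
  - set (q := (fst w / d, snd w / d)); set (rho2 := nrm2 q - 1).
    assert (Hq : nrm2 (psub m q) = rho2).
    { assert (E : nrm2 (psub m q) - rho2 = (d * (nrm2 m + 1) - 2 * dot w m) / d).
      { unfold rho2, q; clearbody d w; clear - d0; coords; field; exact d0. }
      rewrite Hm in E; unfold Rdiv in E; lra. }
    assert (rho2 >= 0) by (rewrite <- Hq; pose proof (nrm2_ge0 (psub m q)); lra).
    apply (cons_lc S x y q (fst q + sqrt rho2, snd q) m); auto.
    + unfold q; apply constructible_pair; auto; constructible_num_auto.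
    + unfold rho2, q; apply constructible_pair; auto; simpl; constructible_num_auto.
    + apply on_circle_nrm2; rewrite Hq, nrm2_psub_shift, sqrt_sqrt; lra.
Qed.

(* off a diameter: the midpoint lies on the radical axis of the geodesic circle and the bisector *)
Lemma constructible_bisector_meet_orth_circle x y c m : K x -> K y -> K c -> x <> y ->
  nrm2 x < 1 -> 2 * dot c x = 1 + nrm2 x -> 2 * dot c m = 1 + nrm2 m ->
  on_hyp_bisector x y m -> K m.
Proof.
  intros Hx Hy Hc hxy hx hcx hcm Hb.
  set (d := nrm2 x - nrm2 y); set (w := hyp_bisector_normal x y).
  set (v := (d * fst c - fst w, d * snd c - snd w)).
  assert (Hv : forall z, 2 * dot c z = 1 + nrm2 z -> 2 * dot v z = d * (nrm2 z + 1) - 2 * dot w z).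
  { intros z hz; replace (2 * dot v z) with (d * (2 * dot c z) - 2 * dot w z)
      by (unfold v, dot; simpl; ring).
    rewrite hz; ring. }
  assert (Hvm : dot v m = 0).
  { pose proof (hyp_bisector_expand x y m) as E; fold d w in E.
    unfold on_hyp_bisector in Hb; specialize (Hv m hcm); lra. }
  assert (Hvx : dot v x <> 0).
  { pose proof (hyp_bisector_expand_left x y) as E; fold d w in E.
    pose proof (nrm2_psub_gt0 _ _ (not_eq_sym hxy)).
    assert (0 < (1 - nrm2 x) * nrm2 (psub y x)) by (apply Rmult_lt_0_compat; lra).
    specialize (Hv x hcx); lra. }
  assert (Kw : K w) by now apply constructible_hyp_bisector_normal.
  apply (cons_lc S pzero (rot v) c x m); try assumption.
  - now apply cons_base.
  - apply constructible_rot; auto.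
    unfold v, d; apply constructible_pair; auto; constructible_num_auto.
  - now apply (rot_neq_pzero v x).
  - now apply on_line_rot.
  - apply on_circle_nrm2; rewrite !orth_circle_radius; auto.
Qed.

Lemma hyp_midpoint_constructible x y m : S x -> S y -> nrm2 x < 1 -> nrm2 y < 1 -> x <> y ->
  hyp_midpoint x y m -> K m.
Proof.
  intros Sx Sy hx hy hxy [Hg Hr].
  assert (Hb : on_hyp_bisector x y m).
  { apply rho_eq_iff; auto; now apply (geodesic_in_disk x y). }
  destruct Hg as [[_ (t & _ & ->)] | [hk (c & r & _ & hc & Dx & Dy & Dm & _)]].
  - apply (constructible_bisector_meet_line x y); auto using cons_base.
    coords; ring.
  - apply nrm2_of_dist in Dx, Dy, Dm.
    apply (orth_circle_iff c r _ hc) in Dx; apply (orth_circle_iff c r _ hc) in Dy;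
      apply (orth_circle_iff c r _ hc) in Dm.
    assert (Ec : c = orth_center x y) by now apply orth_center_unique.
    apply (constructible_bisector_meet_orth_circle x y c); auto using cons_base.
    rewrite Ec; apply constructible_orth_center; now apply cons_base.
Qed.

End MidpointConstruction.

Theorem theorem1p2 (x y : pt) :
  in_disk x -> in_disk y -> x <> y ->
  (exists m, hyp_midpoint x y m) /\
  (forall m, hyp_midpoint x y m ->
     constructible (fun p => p = pzero \/ p = pone \/ p = x \/ p = y) m).
Proof.
  rewrite !in_disk_nrm2; intros hx hy hxy; split.
  - now apply hyp_midpoint_exists.
  - intros m Hm; apply (hyp_midpoint_constructible _ (or_introl eq_refl)
      (or_intror (or_introl eq_refl)) x y m); auto.
Qed.
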